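(* There exists an ASCM $\mathcal{M}^*$ over $\{\mathbf{V},\mathbf{I}\}$ whose causal diagram $\mathcal{G}$ is semi-Markovian (contains bidirected edges) such that no ASCM $\widehat{\mathcal{M}}$ in which Markovianity is enforced satisfies both (1) $P^{\widehat{\mathcal{M}}}(\mathbf{V},\mathbf{I})=P^{\mathcal{M}^*}(\mathbf{V},\mathbf{I})$ and (2) every feature counterfactual query induced by $\widehat{\mathcal{M}}$ lies in its optimal bound derived from $P^{\mathcal{M}^*}(\mathbf{V})$ and $\mathcal{G}$.
   Context: SCMs $\langle\mathbf{U},\mathbf{V},\mathcal{F},P(\mathbf{U})\rangle$, interventions $do(\mathbf{x})$ and counterfactual distributions $P^{\mathcal{M}}(\mathbf{y}_{\mathbf{x}},\dots)=\int\mathbf{1}[\mathbf{Y}_{\mathbf{x}}(\mathbf{u})=\mathbf{y},\dots]\,dP(\mathbf{u})$ are standard. The causal diagram has a directed edge $V_j\to V_k$ if $V_j$ is an argument of $f_{V_k}$ and a bidirected edge $V_j\leftrightarrow V_k$ if their exogenous arguments are not independent; a model is Markovian (causally sufficient) if its exogenous variables are mutually independent and each affects at most one endogenous variable, i.e., its diagram has no bidirected edges among the generative factors; semi-Markovian diagrams may have bidirected edges. An ASCM is an SCM $\langle\mathbf{U},\{\mathbf{V},\mathbf{I}\},\mathcal{F},P(\mathbf{U})\rangle$ with $\mathbf{U}=\{\mathbf{U}_0,\mathbf{U}_{\mathbf{I}}\}$, observed generative factors $\mathbf{V}$ (discrete finite domains) with mechanisms depending on $\mathbf{U}_0,\mathbf{V}$,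 and an $m$-dimensional image $\mathbf{I}=f_{\mathbf{I}}(\mathbf{V},\mathbf{U}_{\mathbf{I}})$ with $f_{\mathbf{I}}$ invertible w.r.t. $\mathbf{V}$. For $\mathbf{W},\mathbf{X}\subseteq\mathbf{V}$ and a value $\mathbf{x}'$, with $h^*_{\mathbf{W}}$ the inverse of the image mechanism of $\mathcal{M}^*$ w.r.t. $\mathbf{W}$, the feature counterfactual query of a model $\mathcal{M}$ at images $\mathbf{i},\mathbf{i}'$ is $\int\mathbf{1}[h^*_{\mathbf{W}}(\mathbf{i}^{(1)})=\mathbf{w},h^*_{\mathbf{W}}(\mathbf{i}^{(2)})=\mathbf{w}']\,dP^{\mathcal{M}}(\mathbf{i}^{(1)},\mathbf{i}^{(2)}_{\mathbf{x}'})$ with $\mathbf{w}=h^*_{\mathbf{W}}(\mathbf{i})$, $\mathbf{w}'=h^*_{\mathbf{W}}(\mathbf{i}')$; its optimal bound derived from $P(\mathbf{V})$ and $\mathcal{G}$ is the interval between the min and max of $P^{\mathcal{M}}(\mathbf{W}=\mathbf{w},\mathbf{W}_{\mathbf{x}'}=\mathbf{w}')$ over SCMs $\mathcal{M}$ over $\mathbf{V}$ compatible with $\mathcal{G}$ (restricted to $\mathbf{V}$) with $P^{\mathcal{M}}(\mathbf{V})=P(\mathbf{V})$. *)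

From HB Require Import structures.
From mathcomp Require Import all_boot all_order all_algebra.
From mathcomp Require Import all_classical all_reals all_analysis.

Set Implicit Arguments.
Unset Strict Implicit.
Unset Printing Implicit Defensive.

Import Order.TTheory GRing.Theory Num.Theory.
Local Open Scope classical_set_scope.
Local Open Scope ring_scope.

(* Generative factors V = {V_0, ..., V_(n-1)}, V_k with finite domain D k.  *)
Definition vals (n : nat) (D : 'I_n -> finType) := forall k : 'I_n, D k.

Definition mechs (n : nat) (D : 'I_n -> finType) (U : Type) :=
  forall k : 'I_n, vals D -> U -> D k.

Definition is_arg n (D : 'I_n -> finType) (U : Type) (f : mechs D U)
    (j k : 'I_n) : Prop :=
  exists (v v' : vals D) (u : U),
    (forall i, i != j -> v i = v' i) /\ f k v u <> f k v' u.

Definition acyclic n (D : 'I_n -> finType) (U : Type) (f : mechs D U) : Prop :=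
  exists rank : 'I_n -> nat, forall j k, is_arg f j k -> (rank j < rank k)%N.

Record SCM (n : nat) (D : 'I_n -> finType) (d : measure_display)
    (U : measurableType d) (R : realType) := MkSCM {
  scm_P : probability U R;
  scm_f : mechs D U;
  scm_f_meas : forall k (v : vals D) (a : D k),
      measurable [set u | scm_f k v u = a];
  scm_acyclic : acyclic scm_f
}.

(* only the components of x indexed by X are used.                     *)
Definition is_sol n (D : 'I_n -> finType) d (U : measurableType d) R
    (M : SCM D U R) (X : {set 'I_n}) (x : vals D) (u : U) (v : vals D) : Prop :=
  forall k, v k = if k \in X then x k else scm_f M k v u.

Definition is_obs n (D : 'I_n -> finType) d (U : measurableType d) R
    (M : SCM D U R) (u : U) (v : vals D) : Prop :=
  forall k, v k = scm_f M k v u.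

(* The exogenous argument of V_k, seen through the response function
   u |-> f_{V_k}(., u). *)
Definition resp n (D : 'I_n -> finType) d (U : measurableType d) R
    (M : SCM D U R) (k : 'I_n) (u : U) : vals D -> D k :=
  fun v => scm_f M k v u.

Definition exo_indep n (D : 'I_n -> finType) d (U : measurableType d) R
    (M : SCM D U R) (j k : 'I_n) : Prop :=
  forall (g : vals D -> D j) (h : vals D -> D k),
    scm_P M [set u | resp M j u = g /\ resp M k u = h] =
    (scm_P M [set u | resp M j u = g] * scm_P M [set u | resp M k u = h])%E.

Definition bidir n (D : 'I_n -> finType) d (U : measurableType d) R
    (M : SCM D U R) (j k : 'I_n) : Prop :=
  j != k /\ ~ exo_indep M j k.

(* Markovian: exogenous arguments of the V_k are mutually independent
   (each exogenous variable affects at most one generative factor). *)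
Definition markovian n (D : 'I_n -> finType) d (U : measurableType d) R
    (M : SCM D U R) : Prop :=
  forall g : forall k : 'I_n, vals D -> D k,
    scm_P M [set u | forall k, resp M k u = g k] =
    (\prod_(k < n) scm_P M [set u | resp M k u = g k])%E.

Definition has_bidir n (D : 'I_n -> finType) d (U : measurableType d) R
    (M : SCM D U R) : Prop :=
  exists j k, bidir M j k.

Definition compatible n (D : 'I_n -> finType) d (U : measurableType d)
    d0 (U0 : measurableType d0) R (M : SCM D U R) (M0 : SCM D U0 R) : Prop :=
  (forall j k, is_arg (scm_f M) j k -> is_arg (scm_f M0) j k) /\
  (forall j k, bidir M j k -> bidir M0 j k).

Definition same_V_law n (D : 'I_n -> finType) d (U : measurableType d)
    d0 (U0 : measurableType d0) R (M : SCM D U R) (M0 : SCM D U0 R) : Prop :=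
  forall v : vals D,
    scm_P M [set u | is_obs M u v] = scm_P M0 [set u | is_obs M0 u v].

Definition ctf_prob n (D : 'I_n -> finType) d (U : measurableType d) R
    (M : SCM D U R) (W X : {set 'I_n}) (x' w w' : vals D) : \bar R :=
  scm_P M [set u | exists v1 v2, is_obs M u v1 /\ is_sol M X x' u v2 /\
                   (forall k, k \in W -> v1 k = w k) /\
                   (forall k, k \in W -> v2 k = w' k)].

Record ASCM (n : nat) (D : 'I_n -> finType) (m : nat) (d : measure_display)
    (U : measurableType d) (R : realType) := MkASCM {
  ascm_scm : SCM D U R;
  ascm_fI : vals D -> U -> m.-tuple R;
  ascm_fI_meas : forall v, measurable_fun setT (ascm_fI v);
  ascm_h : m.-tuple R -> vals D;
  ascm_h_meas : forall v, measurable (ascm_h @^-1` [set v]);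
  ascm_inv : forall v u, ascm_h (ascm_fI v u) = v
}.

Definition same_VI_law n (D : 'I_n -> finType) m d (U : measurableType d)
    d0 (U0 : measurableType d0) R (M : ASCM D m U R) (M0 : ASCM D m U0 R)
    : Prop :=
  forall (v : vals D) (B : set (m.-tuple R)), measurable B ->
    scm_P (ascm_scm M)
      [set u | exists v1, is_obs (ascm_scm M) u v1 /\ v1 = v /\ ascm_fI M v1 u \in B] =
    scm_P (ascm_scm M0)
      [set u | exists v1, is_obs (ascm_scm M0) u v1 /\ v1 = v /\ ascm_fI M0 v1 u \in B].

(* Feature counterfactual query of model M at images i, i' (w.r.t. the
   inverse h* of the image mechanism of M0 = M^* ):
   P^M( h*_W(I) = h*_W(i), h*_W(I_{x'}) = h*_W(i') ). *)
Definition feat_query n (D : 'I_n -> finType) m d (U : measurableType d)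
    d0 (U0 : measurableType d0) R (M0 : ASCM D m U0 R) (M : ASCM D m U R)
    (W X : {set 'I_n}) (x' : vals D) (i i' : m.-tuple R) : \bar R :=
  scm_P (ascm_scm M)
    [set u | exists v1 v2, is_obs (ascm_scm M) u v1 /\
                           is_sol (ascm_scm M) X x' u v2 /\
       (forall k, k \in W -> ascm_h M0 (ascm_fI M v1 u) k = ascm_h M0 i k) /\
       (forall k, k \in W -> ascm_h M0 (ascm_fI M v2 u) k = ascm_h M0 i' k)].

Definition bound_set n (D : 'I_n -> finType) d0 (U0 : measurableType d0) R
    (M0 : SCM D U0 R) (W X : {set 'I_n}) (x' w w' : vals D) : set (\bar R) :=
  [set q | exists (d : measure_display) (U : measurableType d) (M : SCM D U R),
     compatible M M0 /\ same_V_law M M0 /\ q = ctf_prob M W X x' w w'].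

Definition in_opt_bound (R : realType) (q : \bar R) (S : set (\bar R)) : Prop :=
  (ereal_inf S <= q /\ q <= ereal_sup S)%E.

Definition queries_in_bounds n (D : 'I_n -> finType) m d (U : measurableType d)
    d0 (U0 : measurableType d0) R (M0 : ASCM D m U0 R) (M : ASCM D m U R)
    : Prop :=
  forall (W X : {set 'I_n}) (x' : vals D) (i i' : m.-tuple R),
    in_opt_bound (feat_query M0 M W X x' i i')
      (bound_set (ascm_scm M0) W X x' (ascm_h M0 i) (ascm_h M0 i')).

From HB Require Import structures.
From mathcomp Require Import all_boot all_order all_algebra.
From mathcomp Require Import all_classical all_reals all_analysis.
From mathcomp Require Import lra.

Set Implicit Arguments.
Unset Strict Implicit.
Unset Printing Implicit Defensive.
Import Order.TTheory GRing.Theory Num.Theory.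
Local Open Scope classical_set_scope.
Local Open Scope ring_scope.

(* In [Mstar] the two binary factors both copy one fair coin, so V_0 <-> V_1,
   and the image is the real number 2 V_0 + V_1. An SCM compatible with this
   diagram has no directed edges, so for every intervention set X containing
   a the counterfactual P(V = (0,0), V_{a := 1} = 1_a) is P(V = (0,0)) = 1/2;
   the bounds thus force the two feature queries of a Markovian fit, for
   X = {a} and X = {a, b}, to have mass at least 1/2 each.
   In the fit the diagram is acyclic, so some factor V_a is a root and the
   other, V_b, listens to V_a only. Markovianity makes the responses of V_a
   and V_b independent; as V = 1_a is null while V_a = 1 has mass 1/2, almost
   surely V_b answers V_a = 1 with V_b = 1. Then the world do(V_a := 1) is
   (1,1), and its image cannot decode to 1_a together with the image of the
   world do(V := 1_a): the decoding has a one-point fibre over 1_a and the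
   fit's image mechanism is injective. So the two queries overlap in a null
   set. Both also miss the event, of mass 1/2, where V = (1,1) is observed
   with its correct image: total mass 3/2 > 1. *)

Section Mechanisms.
Variables (n : nat) (D : 'I_n -> finType) (U : Type) (f : mechs D U).

Lemma mechs_eq_off_args k (v v' : vals D) u :
  (forall j, v j != v' j -> ~ is_arg f j k) -> f k v u = f k v' u.
Proof.
move: v; suff IH c : forall v, (#|[set j | v j != v' j]%SET| < c)%N ->
    (forall j, v j != v' j -> ~ is_arg f j k) -> f k v u = f k v' u.
  by move=> v; apply: IH.
elim: c => // c IH v hc noarg.
case: (pickP [pred j | v j != v' j]) => [j /= hj | same]; last first.
  suff -> : v = v' by [].
  by apply: functional_extensionality_dep => i; apply/eqP/negbFE; exact: same.
pose w : vals D := fun i => if i == j then v' i else v i.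
have vw : f k v u = f k w u.
  case: (f k v u =P f k w u) => // ne; exfalso; apply: (noarg j hj).
  by exists v, w, u; split => // i /negbTE ij; rewrite /w ij.
have lt_card : (#|[set i | w i != v' i]%SET| < #|[set i | v i != v' i]%SET|)%N.
  apply: proper_card; rewrite properE; apply/andP; split.
    apply/fintype.subsetP => i; rewrite !inE /w.
    by case: (i =P j) => [->|//]; rewrite eqxx.
  by apply/fintype.subsetPn; exists j; rewrite !inE /w ?eqxx.
rewrite vw; apply: IH; first exact: leq_trans lt_card hc.
move=> i; rewrite /w; case: (i =P j) => _; [by rewrite eqxx | exact: noarg].
Qed.

Lemma acyclic_irrefl k : acyclic f -> ~ is_arg f k k.
Proof. by move=> [rank hrank] /hrank; rewrite ltnn. Qed.

End Mechanisms.

Lemma acyclic_source n (D : 'I_n.+1 -> finType) (U : Type) (f : mechs D U) :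
  acyclic f -> exists a, forall j, ~ is_arg f j a.
Proof.
move=> [rank hrank]; case: (@arg_minnP _ ord0 xpredT rank isT) => a _ amin.
by exists a => j /hrank; rewrite ltnNge amin.
Qed.

Lemma ctf_prob_no_args n (D : 'I_n -> finType) d (U : measurableType d)
    (R : realType) (M : SCM D U R) (X : {set 'I_n}) (x' w w' : vals D) :
  (forall j k, ~ is_arg (scm_f M) j k) ->
  (forall k, w' k = if k \in X then x' k else w k) ->
  ctf_prob M [set: 'I_n]%SET X x' w w' = scm_P M [set u | is_obs M u w].
Proof.
move=> noarg w'E; congr (scm_P M _); apply/seteqP; split => u /=.
  move=> [v1 [v2 [ob [_ [eqw _]]]]].
  suff <- : v1 = w by [].
  by apply: functional_extensionality_dep => k; rewrite eqw ?inE.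
move=> ob; exists w, w'; split=> //; split; last by split.
move=> k; rewrite w'E; case: ifP => // _; rewrite ob.
exact: mechs_eq_off_args.
Qed.

Lemma measurable_saturated d (U : measurableType d) (T : finType) (s : U -> T)
    (A : set U) :
  (forall t, measurable (s @^-1` [set t])) ->
  (forall u u', s u = s u' -> A u -> A u') -> measurable A.
Proof.
move=> fiber_meas satA.
rewrite (_ : A = \bigcup_(t in s @` A) s @^-1` [set t]).
  by apply: fin_bigcup_measurable => // ; exact: finite_finset.
apply/seteqP; split => [u Au | u [_ [u' Au' <-] /= su']]; first by exists (s u).
exact: satA (esym su') Au'.
Qed.

Lemma measurable_dffun_eq d (U : measurableType d) (I : finType)
    (T : I -> finType) (F : U -> forall i, T i) (x : {dffun forall i, T i}) :
  (forall i t, measurable [set u | F u i = t]) ->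
  measurable [set u | finfun (F u) = x].
Proof.
move=> F_meas; rewrite (_ : [set u | _] = \bigcap_(i in setT) [set u | F u i = x i]).
  by apply: fin_bigcap_measurable => //; exact: finite_finset.
apply/seteqP; split => u /=; first by move=> <- i _; rewrite ffunE.
move=> Fx; apply/ffunP => i; rewrite ffunE; exact: Fx.
Qed.

Section Indistinguishable.
Variables (n : nat) (D : 'I_n -> finType) (m : nat) (d : measure_display)
  (U : measurableType d) (R : realType) (M : ASCM D m U R)
  (h0 : m.-tuple R -> vals D).
Hypothesis h0_meas : forall v, measurable (h0 @^-1` [set v]).

Local Notation f := (scm_f (ascm_scm M)).
Local Notation fI := (ascm_fI M).

Definition indist (u u' : U) : Prop :=
  (forall k v, f k v u = f k v u') /\ (forall v, h0 (fI v u) = h0 (fI v u')).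

Let VT := {dffun forall k : 'I_n, D k}.

Let val_of (v : VT) : vals D := fun k => v k.

Let val_ofK (v : vals D) : val_of (finfun v) = v.
Proof. by apply: functional_extensionality_dep => k; rewrite /val_of ffunE. Qed.

(* All mechanisms and decoded images at [u]: finitely many discrete random
   variables, so an event closed under [indist] is a finite union of fibres. *)
Let profile (u : U) : {ffun VT -> VT * VT} :=
  [ffun v => (finfun (fun k => f k (val_of v) u),
              finfun (fun k => h0 (fI (val_of v) u) k))].

Let profile_indist u u' : profile u = profile u' -> indist u u'.
Proof.
move=> eq_uu'.
have eqv (v : vals D) :=
  congr1 (fun p : {ffun VT -> VT * VT} => p (finfun v : VT)) eq_uu'.
split=> [k v | v]; move: (eqv v); rewrite !ffunE !val_ofK => -[eq_f eq_h].
  by have := congr1 (fun w : VT => w k) eq_f; rewrite !ffunE.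
by have := congr1 val_of eq_h; rewrite !val_ofK.
Qed.

Let profile_fiber_meas p : measurable (profile @^-1` [set p]).
Proof.
rewrite (_ : _ @^-1` _ = \bigcap_(v in setT)
    ([set u | finfun (fun k => f k (val_of v) u) = (p v).1]
     `&` [set u | finfun (fun k => h0 (fI (val_of v) u) k) = (p v).2])).
  apply: fin_bigcap_measurable => [|v _]; first exact: finite_finset.
  apply: measurableI; first by apply: measurable_dffun_eq => k t; exact: scm_f_meas.
  rewrite (_ : [set u | _] = fI (val_of v) @^-1` (h0 @^-1` [set val_of (p v).2])).
    by rewrite -[X in measurable X]setTI; exact: ascm_fI_meas.
  apply/seteqP; split => u /= eq_h; first by rewrite -eq_h val_ofK.
  by apply/ffunP => k; rewrite ffunE eq_h.
apply/seteqP; split => u /=.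
  by move=> <- v _; rewrite ffunE.
move=> hp; apply/ffunP => v; rewrite ffunE.
by case: (p v) (hp v I) => x y /= [-> ->].
Qed.

Lemma measurable_indist_closed (A : set U) :
  (forall u u', indist u u' -> A u -> A u') -> measurable A.
Proof.
move=> closedA; apply: (measurable_saturated profile_fiber_meas).
by move=> u u' /profile_indist; apply: closedA.
Qed.

End Indistinguishable.

Lemma same_VI_law_V n (D : 'I_n -> finType) m d (U : measurableType d)
    d0 (U0 : measurableType d0) R (M : ASCM D m U R) (M0 : ASCM D m U0 R) :
  same_VI_law M M0 -> same_V_law (ascm_scm M) (ascm_scm M0).
Proof.
have obsE d' (U' : measurableType d') (N : ASCM D m U' R) v :
    [set u | exists v1, is_obs (ascm_scm N) u v1 /\ v1 = v /\ ascm_fI N v1 u \in setT]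
    = [set u | is_obs (ascm_scm N) u v].
  apply/seteqP; split => u /=; first by move=> [v1 [ob [<- _]]].
  by move=> ob; exists v; rewrite in_setT.
by move=> VI v; have := VI v setT measurableT; rewrite !obsE.
Qed.

Lemma probability_add3_le1 d (T : measurableType d) (R : realType)
    (P : probability T R) (A B C : set T) :
  measurable A -> measurable B -> measurable C ->
  P (A `&` B) = 0%E -> A `&` C = set0 -> B `&` C = set0 ->
  (P A + P B + P C <= 1)%E.
Proof.
move=> mA mB mC nullAB AC0 BC0.
have mBA : measurable (B `\` A) by exact: measurableD.
have mABA : measurable (A `|` B `\` A) by exact: measurableU.
have -> : P B = P (B `\` A).
  by rewrite (measureDI P mB mA) (setIC B A) -[RHS]adde0; congr (_ + _)%E.
have disjA : A `&` (B `\` A) = set0 by apply/seteqP; split => // u [? []].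
have disjC : (A `|` B `\` A) `&` C = set0.
  rewrite setIUl AC0 set0U; apply/seteqP; split => // u [[Bu _] Cu].
  by rewrite -BC0.
rewrite -(measureU P mA mBA disjA) -(measureU P mABA mC disjC).
exact/probability_le1/measurableU.
Qed.

Section Witness.
Variable R : realType.

Definition D2 : 'I_2 -> finType := fun=> bool.

Definition onehot (a : 'I_2) : vals D2 := fun k => k == a.

Lemma ord2_cases (a b k : 'I_2) : a != b -> k = a \/ k = b.
Proof.
by case: a b k => [[|[|a]] ?] [[|[|b]] ?] [[|[|k]] ?] //= _;
  [left | right | right | left]; apply/val_inj.
Qed.

Lemma ord2_neq (a : 'I_2) : exists b, a != b.
Proof.
by exists (if a == ord0 then ord_max else ord0); case: (a =P ord0) => [->|/eqP].
Qed.

Lemma prod_ord2 (F : 'I_2 -> \bar R) a b :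
  a != b -> (\prod_(k < 2) F k = F a * F b)%E.
Proof.
move=> ab; rewrite (bigD1 a) // (bigD1 b) 1?eq_sym //= big1 ?mule1 //.
move=> k /andP[ka kb].
by case: (ord2_cases k ab) ka kb => ->; rewrite eqxx.
Qed.

Definition Pstar : probability bool R := bernoulli_prob (2^-1).

Lemma Pstar_set1 x : Pstar [set x] = (2^-1 : R)%:E.
Proof.
have p01 : (0 <= (2^-1 : R) <= 1) by apply/andP; split; lra.
rewrite /Pstar /= (bernoulli_probE p01) !diracE /unstable.onem.
case: x; first by rewrite mem_set // memNset //= -!EFinM -EFinD mulr1 mulr0 addr0.
by rewrite memNset // mem_set //= -!EFinM -EFinD mulr0 mulr1 add0r; congr (_%:E); lra.
Qed.

Definition fstar : mechs D2 bool := fun _ _ u => u.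

Lemma fstar_meas k (v : vals D2) (x : D2 k) : measurable [set u | fstar k v u = x].
Proof. by []. Qed.

Lemma fstar_acyclic : acyclic fstar.
Proof. by exists (fun=> 0%N) => j k [v [v' [u []]]]. Qed.

Definition SCMstar : SCM D2 bool R := MkSCM Pstar fstar_meas fstar_acyclic.

(* The image is the number [2 V_0 + V_1]; [hstar] reads its binary digits
   back, and sends every real outside [{0, 1, 2, 3}] to [(false, false)]. *)
Definition code (v : vals D2) : R := (2 * v ord0 + v ord_max)%N%:R.

Definition digit_set (k : 'I_2) : seq R := if k == ord0 then [:: 2; 3] else [:: 1; 3].

Definition hstar (t : 1.-tuple R) : vals D2 := fun k => tnth t ord0 \in digit_set k.

Definition fIstar (v : vals D2) (u : bool) : 1.-tuple R := [tuple code v].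

Lemma fIstar_meas v : measurable_fun setT (fIstar v).
Proof. exact: measurable_cst. Qed.

Lemma hstar_inv v u : hstar (fIstar v u) = v.
Proof.
apply: functional_extensionality_dep => k; rewrite /hstar (tnth_nth 0) /= /code.
by have [->|->] := ord2_cases k (isT : ord0 != ord_max :> 'I_2);
  case: (v ord0); case: (v ord_max); rewrite /digit_set /= !inE ?eqr_nat ?pnatr_eq1.
Qed.

Lemma measurable_mem_seq (s : seq R) (b : bool) : measurable [set x : R | (x \in s) = b].
Proof.
have mem_meas : measurable [set x : R | x \in s].
  apply: countable_measurable; first exact: measurable_set1.
  apply: finite_set_countable.
  by apply/finite_seqP; exists s.
case: b; first exact: mem_meas.
rewrite (_ : [set x | _] = ~` [set x | x \in s]); first exact: measurableC.
by apply/seteqP; split => x /=; case: (x \in s).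
Qed.

Lemma hstar_meas w : measurable (hstar @^-1` [set w]).
Proof.
rewrite (_ : _ @^-1` _ = (fun t : 1.-tuple R => tnth t ord0) @^-1`
    \bigcap_(k in setT) [set x | (x \in digit_set k) = w k]).
  rewrite -[X in measurable X]setTI; apply: measurable_tnth => //.
  apply: fin_bigcap_measurable => [|k _]; first exact: finite_finset.
  exact: measurable_mem_seq.
apply/seteqP; split => t /=; first by move=> <- k.
by move=> hw; apply: functional_extensionality_dep => k; exact: hw.
Qed.

Definition Mstar : ASCM D2 1 bool R := MkASCM SCMstar fIstar_meas hstar_meas hstar_inv.

Lemma hstar_onehot a t : hstar t = onehot a -> t = fIstar (onehot a) true.
Proof.
move=> ht; apply: eq_from_tnth => i; rewrite (ord1 i) [RHS](tnth_nth 0) /=.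
have digit k := congr1 (fun v => v k) ht.
move: (digit ord0) (digit ord_max); rewrite /hstar /digit_set /onehot /code /= !inE.
have neq : (ord_max == ord0 :> 'I_2) = false by [].
have [->|->] := ord2_cases a (isT : ord0 != ord_max :> 'I_2);
  rewrite eqxx ?(eq_sym ord0) neq.
  by move=> + /negbT/norP[_ /negPf x3]; rewrite x3 orbF => /eqP.
by move=> /negbT/norP[_ /negPf ->]; rewrite orbF => /eqP.
Qed.

Lemma obs_star_const x : [set u | is_obs SCMstar u (fun=> x)] = [set x].
Proof. by apply/seteqP; split => u /=; [move/(_ ord0) | move=> -> k]. Qed.

Lemma obs_star_onehot a : [set u | is_obs SCMstar u (onehot a)] = set0.
Proof.
apply/seteqP; split => u //= ob.
have [b ab] := ord2_neq a.
by move: (ob a) (ob b); rewrite /= /onehot /fstar eqxx eq_sym (negbTE ab) => <-.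
Qed.

Lemma Mstar_has_bidir : has_bidir (ascm_scm Mstar).
Proof.
exists ord0, ord_max; split=> // indep.
have resp_true k : [set u | resp SCMstar k u = (fun=> true)] = [set true].
  by apply/seteqP; split => u /=; [move/(congr1 (fun g => g (fun=> true))) | move=> ->].
have := indep (fun=> true) (fun=> true).
rewrite (_ : [set u | _ /\ _] = [set true]); last first.
  apply/seteqP; split => u /=; last by move=> ->.
  by case=> /(congr1 (fun g => g (fun=> true))).
rewrite -[X in _ = (X * _)%E]/(Pstar [set u | resp SCMstar ord0 u = (fun=> true)]).
rewrite -[X in _ = (_ * X)%E]/(Pstar [set u | resp SCMstar ord_max u = (fun=> true)]).
by rewrite !resp_true Pstar_set1 -EFinM => /eqP; rewrite eqe => /eqP; lra.
Qed.

Lemma compatible_star_no_args d (U : measurableType d) (M : SCM D2 U R) :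
  compatible M SCMstar -> forall j k, ~ is_arg (scm_f M) j k.
Proof. by move=> [args _] j k /args [v [v' [u []]]]. Qed.

Lemma bound_star_ge a (X : {set 'I_2}) : a \in X ->
  ((2^-1 : R)%:E <= ereal_inf
     (bound_set SCMstar [set: 'I_2]%SET X (onehot a) (fun=> false) (onehot a)))%E.
Proof.
move=> aX; apply/ereal_infP => _ [d [U [M [compat [law ->]]]]].
rewrite (ctf_prob_no_args (compatible_star_no_args compat)).
  by rewrite law obs_star_const Pstar_set1.
move=> k; case: ifP => [//|kX]; rewrite /onehot.
by case: eqP => // ka; rewrite ka aX in kX.
Qed.

Section MarkovianFit.
Variables (d : measure_display) (U : measurableType d) (Mh : ASCM D2 1 U R) (a b : 'I_2).

Local Notation S := (ascm_scm Mh).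
Local Notation f := (scm_f S).
Local Notation P := (scm_P S).
Local Notation fI := (ascm_fI Mh).

Hypotheses (ab : a != b)
  (source_a : forall v v' u, f a v u = f a v' u)
  (parent_b : forall v v' u, v a = v' a -> f b v u = f b v' u)
  (markov : markovian S) (VI : same_VI_law Mh Mstar)
  (bounds : queries_in_bounds Mstar Mh).

Lemma obs_hat_meas v : measurable [set u | is_obs S u v].
Proof.
apply: (measurable_indist_closed (M := Mh) hstar_meas) => u u' [eq_f _] ob k.
by rewrite -eq_f.
Qed.

Lemma resp_hat_meas k g : measurable [set u | resp S k u = g].
Proof.
apply: (measurable_indist_closed (M := Mh) hstar_meas) => u u' [eq_f _] <-.
by apply: boolp.funext => v; rewrite /resp eq_f.
Qed.

Lemma obs_hat_uniq u v1 v2 : is_obs S u v1 -> is_obs S u v2 -> v1 = v2.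
Proof.
move=> ob1 ob2; have eq_a : v1 a = v2 a by rewrite ob1 ob2; exact: source_a.
apply: functional_extensionality_dep => k; case: (ord2_cases k ab) => -> //.
by rewrite ob1 ob2; exact: parent_b.
Qed.

Let i0 := fIstar (fun=> false) true.
Let i1 := fIstar (onehot a) true.

(* The event of [feat_query Mstar Mh [set: 'I_2] X (onehot a) i0 i1]. *)
Definition query_event (X : {set 'I_2}) := [set u | exists v1 v2,
  is_obs S u v1 /\ is_sol S X (onehot a) u v2 /\
  (forall k, k \in [set: 'I_2]%SET -> hstar (fI v1 u) k = hstar i0 k) /\
  (forall k, k \in [set: 'I_2]%SET -> hstar (fI v2 u) k = hstar i1 k)].

Lemma query_event_meas X : measurable (query_event X).
Proof.
apply: (measurable_indist_closed (M := Mh) hstar_meas).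
move=> u u' [eq_f eq_h] [v1 [v2 [ob [sol [img1 img2]]]]].
exists v1, v2; split; [|split; [|split]] => k.
- by rewrite -eq_f; exact: ob.
- by rewrite -eq_f; exact: sol.
- by rewrite -eq_h; exact: img1.
- by rewrite -eq_h; exact: img2.
Qed.

Lemma query_event_ge (X : {set 'I_2}) :
  a \in X -> ((2^-1 : R)%:E <= P (query_event X))%E.
Proof.
move=> aX; have [lb _] := bounds [set: 'I_2]%SET X (onehot a) i0 i1.
by apply: le_trans lb; rewrite /= !hstar_inv; exact: bound_star_ge.
Qed.

Definition obs_tt_decoded := [set u | exists v1,
  is_obs S u v1 /\ v1 = (fun=> true) /\ fI v1 u \in hstar @^-1` [set fun=> true]].

Lemma obs_tt_decoded_meas : measurable obs_tt_decoded.
Proof.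
apply: (measurable_indist_closed (M := Mh) hstar_meas).
move=> u u' [eq_f eq_h] [v1 [ob [eq_v1 img]]]; exists v1; split.
  by move=> k; rewrite -eq_f; exact: ob.
by split=> //; move: img; rewrite !in_setE /= eq_h.
Qed.

Lemma obs_tt_decoded_prob : P obs_tt_decoded = (2^-1 : R)%:E.
Proof.
rewrite (VI (fun=> true) (hstar_meas _)) -(Pstar_set1 true) -(obs_star_const true).
congr (Pstar _); apply/seteqP; split => u /=; first by move=> [v1 [ob [<- _]]].
by move=> ob; exists (fun=> true); rewrite in_setE /= hstar_inv.
Qed.

Lemma query_event_obs_tt_disj X : query_event X `&` obs_tt_decoded = set0.
Proof.
apply/seteqP; split => u // [[v1 [v2 [ob [_ [img1 _]]]]] [v1' [ob' [eq_v1' img]]]].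
subst v1'; have eq_v1 := obs_hat_uniq ob ob'; subst v1.
move: img (img1 a); rewrite in_setE /= => ->.
by rewrite /i0 hstar_inv inE => /(_ isT).
Qed.

(* Responses forcing V to [onehot a]; [x] is what V_b would be if V_a were
   false, the only freedom left. *)
Definition resp_onehot (x : bool) : forall k, vals D2 -> D2 k :=
  fun k v => if k == a then true else ~~ v a && x.

Lemma resp_profile_meas (g : forall k, vals D2 -> D2 k) :
  measurable [set u | forall k, resp S k u = g k].
Proof.
apply: (measurable_indist_closed (M := Mh) hstar_meas) => u u' [eq_f _] hg k.
by rewrite -hg; apply: boolp.funext => v; rewrite /resp eq_f.
Qed.

Lemma resp_onehot_null x : P [set u | forall k, resp S k u = resp_onehot x k] = 0%E.
Proof.
have obs_null : P [set u | is_obs S u (onehot a)] = 0%E.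
  by rewrite (same_VI_law_V VI) /= obs_star_onehot measure0.
apply/eqP; rewrite -measure_le0 -obs_null.
apply: le_measure; rewrite ?inE; [exact: resp_profile_meas | exact: obs_hat_meas |].
move=> u /= hg k; rewrite -[f k _ u]/(resp S k u (onehot a)) hg.
rewrite /resp_onehot /onehot; case: (ord2_cases k ab) => ->; first by rewrite eqxx.
by rewrite eq_sym (negbTE ab) eqxx.
Qed.

Lemma resp_onehot_a_ge x : ((2^-1 : R)%:E <= P [set u | resp S a u = resp_onehot x a])%E.
Proof.
rewrite -(Pstar_set1 true) -(obs_star_const true) -(same_VI_law_V VI).
apply: le_measure; rewrite ?inE; [exact: obs_hat_meas | exact: resp_hat_meas |].
move=> u /= ob; apply: boolp.funext => v.
by rewrite /resp /resp_onehot eqxx (source_a v (fun=> true)) -ob.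
Qed.

Lemma resp_onehot_b_null x : P [set u | resp S b u = resp_onehot x b] = 0%E.
Proof.
have Pa_pos : (0 < P [set u | resp S a u = resp_onehot x a])%E.
  by apply: lt_le_trans (resp_onehot_a_ge x); rewrite lte_fin invr_gt0 ltr0n.
have := markov (resp_onehot x); rewrite resp_onehot_null (prod_ord2 _ ab).
by move=> /esym/eqP; rewrite mule_eq0 gt_eqF //= => /eqP.
Qed.

Definition b_false_at_tt := [set u | f b (fun=> true) u = false].

Lemma b_false_at_tt_null : P b_false_at_tt = 0%E.
Proof.
have b_false_resp : b_false_at_tt `<=`
    [set u | resp S b u = resp_onehot false b] `|`
    [set u | resp S b u = resp_onehot true b].
  move=> u; rewrite /b_false_at_tt /= => b_false.
  have : resp S b u = resp_onehot (f b (fun=> false) u) b.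
    apply: boolp.funext => v; rewrite /resp /resp_onehot eq_sym (negbTE ab).
    case: (boolP (v a)) => va /=; last by apply: parent_b; rewrite (negbTE va).
    by rewrite -b_false; apply: parent_b; rewrite va.
  by case: (f b (fun=> false) u) => ->; [right | left].
apply/eqP; rewrite -measure_le0.
have b_false_meas : measurable b_false_at_tt by exact: scm_f_meas.
have resp_b_meas x : measurable [set u | resp S b u = resp_onehot x b].
  exact: resp_hat_meas.
apply: (le_trans (y := P ([set u | resp S b u = resp_onehot false b]
                            `|` [set u | resp S b u = resp_onehot true b]))).
  apply: le_measure b_false_resp; rewrite inE //; exact: measurableU.
apply: le_trans (measureU2 _ (resp_b_meas false) (resp_b_meas true)) _.
rewrite -(adde0 0%E); apply: leeD; rewrite measure_le0; apply/eqP;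
  exact: resp_onehot_b_null.
Qed.

Lemma query_events_overlap_sub :
  query_event [set a]%SET `&` query_event [set: 'I_2]%SET `<=` b_false_at_tt.
Proof.
move=> u [[v1 [v2 [_ [sol [_ img]]]]] [v1' [v2' [_ [sol' [_ img']]]]]].
apply/negbTE/negP => b_true.
have eq_v2' : v2' = onehot a.
  by apply: functional_extensionality_dep => k; rewrite sol' inE.
have v2a : v2 a = true by rewrite sol inE eqxx /onehot eqxx.
have eq_v2 : v2 = fun=> true.
  apply: functional_extensionality_dep => k; case: (ord2_cases k ab) => -> //.
  by rewrite sol inE eq_sym (negbTE ab) (parent_b (v' := fun=> true)).
subst v2 v2'.
have img_onehot v : (forall k, k \in [set: 'I_2]%SET -> hstar (fI v u) k = hstar i1 k) ->
    fI v u = i1.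
  by move=> hv; apply: hstar_onehot; apply: functional_extensionality_dep => k;
    rewrite hv ?inE // /i1 hstar_inv.
have := congr1 (ascm_h Mh) (etrans (img_onehot _ img) (esym (img_onehot _ img'))).
by rewrite !ascm_inv => /(congr1 (fun v => v b)); rewrite /onehot eq_sym (negbTE ab).
Qed.

Lemma markovian_fit_absurd : False.
Proof.
have overlap_null : P (query_event [set a]%SET `&` query_event [set: 'I_2]%SET) = 0%E.
  apply/eqP; rewrite -measure_le0 -b_false_at_tt_null.
  apply: le_measure query_events_overlap_sub; rewrite inE.
    by apply: measurableI; exact: query_event_meas.
  exact: scm_f_meas.
have := probability_add3_le1 (query_event_meas _) (query_event_meas _)
  obs_tt_decoded_meas overlap_null
  (query_event_obs_tt_disj _) (query_event_obs_tt_disj _).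
rewrite obs_tt_decoded_prob; apply/negP; rewrite -ltNge.
apply: lt_le_trans (_ : ((2^-1 + 2^-1 + 2^-1 : R)%:E <= _)%E).
  by rewrite lte_fin; lra.
by rewrite !EFinD; apply: leeD => //; apply: leeD; apply: query_event_ge; rewrite !inE.
Qed.

End MarkovianFit.

Lemma no_markovian_fit d (U : measurableType d) (Mh : ASCM D2 1 U R) :
  markovian (ascm_scm Mh) -> same_VI_law Mh Mstar -> queries_in_bounds Mstar Mh -> False.
Proof.
have acyc := scm_acyclic (ascm_scm Mh).
have [a source_a] := acyclic_source acyc; have [b ab] := ord2_neq a.
apply: (markovian_fit_absurd ab).
  by move=> v v' u; apply: mechs_eq_off_args => j _; exact: source_a.
move=> v v' u eq_a; apply: mechs_eq_off_args => j.
by case: (ord2_cases j ab) => ->; [rewrite eq_a eqxx | move=> _; exact: acyclic_irrefl].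
Qed.

End Witness.

Theorem proposition3 (R : realType) :
  exists (n : nat) (D : 'I_n -> finType) (m : nat)
         (d0 : measure_display) (U0 : measurableType d0) (Mstar : ASCM D m U0 R),
    has_bidir (ascm_scm Mstar) /\
    forall (d : measure_display) (U : measurableType d) (Mhat : ASCM D m U R),
      markovian (ascm_scm Mhat) ->
      ~ (same_VI_law Mhat Mstar /\ queries_in_bounds Mstar Mhat).
Proof.
exists 2%N, D2, 1%N, default_measure_display, bool, (Mstar R).
split; first exact: Mstar_has_bidir.
by move=> d U Mh markov [VI bounds]; exact: no_markovian_fit markov VI bounds.
Qed.
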